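(* Let $f$ be a rational function over $k$ of degree $d\ge 2$ and let $\Gamma$ be a vertex set in $\mathbf{P}^1_{\mathrm{Berk}}$. Then the set $\mathcal J(\Gamma)$ is countable.
   Context: $k$ is an algebraically closed field complete with respect to a nontrivial non-Archimedean absolute value; $\mathbf{P}^1_{\mathrm{Berk}}$ is the Berkovich projective line over $k$. A vertex set is a finite nonempty set $\Gamma$ of type II points; the connected components of $\mathbf{P}^1_{\mathrm{Berk}}\smallsetminus\Gamma$ are called $\Gamma$-domains. A $\Gamma$-domain $U$ is an $F$-domain if $f^n(U)\cap\Gamma=\varnothing$ for all $n\ge1$, and a $J$-domain otherwise. $\mathcal J(\Gamma)$ is the set consisting of all $J$-domains together with the elements (singletons) of $\Gamma$. *)

From HB Require Import structures.
From mathcomp Require Import all_boot all_order all_algebra.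
From mathcomp Require Import boolp classical_sets cardinality reals.
Set Implicit Arguments. Unset Strict Implicit. Unset Printing Implicit Defensive.
Import Order.TTheory GRing.Theory Num.Theory.
Local Open Scope ring_scope.
Local Open Scope classical_set_scope.

Section Berk.
Variables (R : realType) (k : closedFieldType) (absv : k -> R).

Definition complete_nonarch_abs : Prop :=
  [/\ (forall x, 0 <= absv x),
      (forall x, absv x = 0 <-> x = 0),
      (forall x y, absv (x * y) = absv x * absv y),
      (forall x y, absv (x + y) <= Order.max (absv x) (absv y)) /\
      (exists c, absv c != 0 /\ absv c != 1) &
      (forall u : nat -> k,
        (forall e, 0 < e -> exists N, forall m n, (N <= m)%N -> (N <= n)%N ->
            absv (u m - u n) < e) ->
        exists l, forall e, 0 < e -> exists N, forall n, (N <= n)%N ->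
            absv (u n - l) < e)].

(** Points of the Berkovich affine line: multiplicative seminorms on k[T]
    extending the absolute value of k. *)
Definition seminormA1 (s : {poly k} -> R) : Prop :=
  [/\ (forall g, 0 <= s g),
      (forall g h, s (g * h) = s g * s h),
      (forall g h, s (g + h) <= s g + s h) &
      (forall c, s c%:P = absv c)].

(** Raw points of P^1_Berk: [Some s] for s in A^1_Berk, [None] for infinity. *)
Definition pt := option ({poly k} -> R).

Definition inP1 (x : pt) : Prop :=
  match x with None => True | Some s => seminormA1 s end.

(** Topology of A^1_Berk: the weakest topology making all s |-> s g continuous
    (generated by the subbasic sets {a < s g < b}). *)
Definition basicA (b : {poly k} * R * R) (s : {poly k} -> R) : bool :=
  b.1.2 < s b.1.1 < b.2.

Definition openA (U : set ({poly k} -> R)) : Prop :=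
  U `<=` seminormA1 /\
  forall s, U s -> exists l : seq ({poly k} * R * R),
    all (basicA^~ s) l /\
    (forall t, seminormA1 t -> all (basicA^~ t) l -> U t).

Definition compactA (K : set ({poly k} -> R)) : Prop :=
  K `<=` seminormA1 /\
  forall F : set (set ({poly k} -> R)),
    (forall V, F V -> openA V) ->
    (forall s, K s -> exists V, F V /\ V s) ->
    exists n (G : 'I_n -> set ({poly k} -> R)),
      (forall i, F (G i)) /\ (forall s, K s -> exists i, G i s).

(** Topology of P^1_Berk: one-point compactification of A^1_Berk. *)
Definition openP1 (U : set pt) : Prop :=
  U `<=` inP1 /\ openA [set s | U (Some s)] /\
  (U None -> compactA [set s | seminormA1 s /\ ~ U (Some s)]).

Definition connectedP1 (S : set pt) : Prop :=
  ~ exists U V, [/\ openP1 U /\ openP1 V, S `<=` U `|` V,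
                    S `&` U !=set0, S `&` V !=set0 & S `&` U `&` V = set0].

Definition component (A : set pt) (x : pt) : set pt :=
  [set y | exists C, [/\ C `<=` A, connectedP1 C, C x & C y]].

Definition typeI (a : k) : pt := Some (fun g => absv g.[a]).

Definition zeta (a : k) (r : R) : {poly k} -> R :=
  fun g => sup [set absv g.[z] | z in [set z | absv (z - a) <= r]].

Definition typeII (x : pt) : Prop :=
  exists a c, c != 0 /\ x = Some (zeta a (absv c)).

Definition vertex_set (G : set pt) : Prop :=
  [/\ finite_set G, G !=set0 & G `<=` typeII].

Record ratfun := RatFun {
  numer : {poly k};
  denom : {poly k};
  numer_denom_coprime : coprimep numer denom;
  denom_neq0 : denom != 0 }.

Definition ratdeg (f : ratfun) : nat :=
  (maxn (size (numer f)) (size (denom f))).-1.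

(** Numerator of g o (P/Q) times Q^(deg g):  sum_i g_i P^i Q^(deg g - i). *)
Definition homog (P Q g : {poly k}) : {poly k} :=
  \sum_(i < size g) g`_i *: (P ^+ i * Q ^+ ((size g).-1 - i)).

(** Action of f on P^1_Berk:  [g]_{f(x)} = [g o f]_x. *)
Definition ratact (f : ratfun) (x : pt) : pt :=
  let P := numer f in let Q := denom f in
  match x with
  | Some s => if s Q == 0 then None
              else Some (fun g => s (homog P Q g) / (s Q) ^+ (size g).-1)
  | None => if (size Q < size P)%N then None
            else typeI (if size P == size Q then lead_coef P / lead_coef Q else 0)
  end.

Definition Gdomain (G U : set pt) : Prop :=
  exists x, [/\ inP1 x, ~ G x & U = component [set y | inP1 y /\ ~ G y] x].

Definition Fdomain (f : ratfun) (G U : set pt) : Prop :=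
  Gdomain G U /\
  forall n, (0 < n)%N -> forall y, U y -> ~ G (iter n (ratact f) y).

Definition Jdomain (f : ratfun) (G U : set pt) : Prop :=
  Gdomain G U /\ ~ Fdomain f G U.

Definition Jset (f : ratfun) (G : set pt) : set (set pt) :=
  [set U | Jdomain f G U \/ exists g, G g /\ U = [set g]].

End Berk.

(* A J-domain U contains a point y with f^n(y) in Gamma for some n >= 1, and U is the component
   of y in the complement of Gamma; so J(Gamma) is covered by Gamma and the components of the
   backward orbit of Gamma, and it suffices that this orbit is countable.  Type II points are
   seminorms with trivial kernel, preimages of such points are again of this kind, and each has
   at most deg f preimages: if s_0, ..., s_d are distinct and push forward to the same t, the
   approximation theorem gives fractions num_l / den_l that are large for s_l and small for every
   other s_i, while [k(T) : k(f)] = d gives a nontrivial relation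
   sum_l phi(c_l) num_l prod_(j <> l) den_j = 0 whose coefficients satisfy
   |phi(c_l)|_i = t(c_l) |Q^n|_i.  For the index l maximizing t(c_l), the l-th term dominates
   the relation in the norm s_l. *)

From mathcomp Require Import all_boot all_order all_algebra.
From mathcomp Require Import boolp classical_sets cardinality reals.
From mathcomp Require Import finmap filter.
From mathcomp Require Import ring lra zify.

Set Implicit Arguments. Unset Strict Implicit. Unset Printing Implicit Defensive.
Import Order.TTheory GRing.Theory Num.Theory.
Local Open Scope ring_scope.
Local Open Scope classical_set_scope.

Section Powers.
Variable R : realType.

Lemma bernoulli_ineq (x : R) n : 1 <= x -> 1 + n%:R * (x - 1) <= x ^+ n.
Proof.
move=> x1; elim: n => [|n IH]; first by rewrite expr0 mul0r addr0.
rewrite exprS -natr1.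
have h0 : 0 <= n%:R :> R by rewrite ler0n.
have h1 : 0 <= x * (x ^+ n - (1 + n%:R * (x - 1))) by apply: mulr_ge0; lra.
have h2 : 0 <= n%:R * ((x - 1) * (x - 1)) by apply: mulr_ge0 => //; nra.
nra.
Qed.

Lemma expr_gt_near (x M : R) : 1 < x -> \forall n \near \oo, M < x ^+ n.
Proof.
move=> x1; have x1_gt0 : 0 < x - 1 by rewrite subr_gt0.
have B_ge0 : 0 <= `|M| / (x - 1) by rewrite divr_ge0 // ltW.
exists (Num.Def.archi_bound (`|M| / (x - 1))) => // n /= Bn.
have : `|M| / (x - 1) < n%:R.
  by apply: lt_le_trans (archi_boundP B_ge0) _; rewrite ler_nat.
rewrite ltr_pdivrMr // => Mn.
have := bernoulli_ineq n (ltW x1); have := ler_norm M; lra.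
Qed.

Lemma expr_lt_near (x e : R) : 0 <= x < 1 -> 0 < e -> \forall n \near \oo, x ^+ n < e.
Proof.
case/andP=> x_ge0 x_lt1 e_gt0; have [->|x_neq0] := eqVneq x 0.
  by exists 1%N => // -[|n] // _; rewrite expr0n.
have x_gt0 : 0 < x by rewrite lt_def x_neq0.
have xV_gt1 : 1 < x^-1 by rewrite invf_gt1.
near=> n; rewrite -(@ltf_pV2 _ e) ?posrE ?exprn_gt0 // -exprVn.
by near: n; exact: expr_gt_near.
Unshelve. all: by end_near.
Qed.

Lemma exprM_lt_near (x c e : R) : 0 <= x < 1 -> 0 <= c -> 0 < e ->
  \forall n \near \oo, x ^+ n * c < e.
Proof.
move=> x01 c_ge0 e_gt0; have c1_gt0 : 0 < c + 1 by lra.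
have := expr_lt_near x01 (divr_gt0 e_gt0 c1_gt0); apply: filterS => n.
have := exprn_ge0 n (proj1 (andP x01)).
by rewrite ltr_pdivlMr //; nra.
Qed.

Lemma expr_div_ltr (p q c d : R) n : 0 < q ->
  (p / q) ^+ n * c < d -> p ^+ n * c < d * q ^+ n.
Proof. by move=> q_gt0; rewrite expr_div_n mulrAC ltr_pdivrMr // exprn_gt0. Qed.

Lemma near_forall_in (T : finType) (J : seq T) (P : T -> nat -> Prop) :
  {in J, forall l, \forall n \near \oo, P l n} ->
  \forall n \near \oo, {in J, forall l, P l n}.
Proof.
move=> HJ; apply: filterS (@filter_forall _ _ (fun l n => l \in J -> P l n) _ _ _) => //.
move=> l; have [lJ|lJ] := boolP (l \in J); last exact: nearW.
by apply: filterS (HJ l lJ) => n.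
Qed.

End Powers.

Definition mulnorm (R : realType) (D : pzRingType) (v : D -> R) : Prop :=
  [/\ forall x, 0 <= v x, v 0 = 0, v 1 = 1, forall x y, v (x * y) = v x * v y
    & forall x y, v (x + y) <= v x + v y].

Section MulNorm.
Variables (R : realType) (D : pzRingType) (v : D -> R).
Hypothesis hv : mulnorm v.

Lemma mulnorm_ge0 x : 0 <= v x. Proof. by case: hv. Qed.
Lemma mulnorm0 : v 0 = 0. Proof. by case: hv. Qed.
Lemma mulnorm1 : v 1 = 1. Proof. by case: hv. Qed.
Lemma mulnormM x y : v (x * y) = v x * v y. Proof. by case: hv. Qed.
Lemma mulnormD x y : v (x + y) <= v x + v y. Proof. by case: hv. Qed.

Lemma mulnormN1 : v (-1) = 1.
Proof.
have sq : v (-1) * v (-1) = 1 by rewrite -mulnormM mulrNN mulr1 mulnorm1.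
have := mulnorm_ge0 (-1); nra.
Qed.

Lemma mulnormN x : v (- x) = v x.
Proof. by rewrite -mulN1r mulnormM mulnormN1 mul1r. Qed.

Lemma mulnormX x n : v (x ^+ n) = v x ^+ n.
Proof. by elim: n => [|n IH]; rewrite ?expr0 ?mulnorm1 // !exprS mulnormM IH. Qed.

Lemma mulnormDB x y : v x - v y <= v (x + y).
Proof. by have := mulnormD (x + y) (- y); rewrite addrK mulnormN; lra. Qed.

Lemma mulnorm_sum (T : Type) (s : seq T) (P : pred T) (F : T -> D) :
  v (\sum_(j <- s | P j) F j) <= \sum_(j <- s | P j) v (F j).
Proof.
elim/big_rec2: _ => [|j y1 y2 _ IH]; first by rewrite mulnorm0.
by apply: le_trans (mulnormD _ _) _; rewrite lerD2l.
Qed.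

Lemma mulnorm_prod (T : Type) (s : seq T) (P : pred T) (F : T -> D) :
  v (\prod_(j <- s | P j) F j) = \prod_(j <- s | P j) v (F j).
Proof. by elim/big_rec2: _ => [|j y1 y2 _ <-]; rewrite ?mulnorm1 ?mulnormM. Qed.

End MulNorm.

Lemma mulnorm_sum_neq0 (R : realType) (D : pzRingType) (w : D -> R) (I : finType)
    (T : I -> D) (l0 : I) (K : R) : mulnorm w -> 0 <= K ->
  (forall l, l != l0 -> #|I|%:R * w (T l) <= K) -> K < w (T l0) -> \sum_l T l != 0.
Proof.
move=> hw K_ge0 small big; apply/eqP => sum0.
have T_l0 : T l0 = - \sum_(l | l != l0) T l.
  by move: sum0; rewrite (bigD1 l0) //= => /eqP; rewrite addr_eq0 => /eqP.
have : #|I|%:R * w (T l0) <= \sum_(l | l != l0) K.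
  apply: le_trans (ler_sum _ small); rewrite T_l0 (mulnormN hw) -mulr_sumr.
  by rewrite ler_wpM2l ?ler0n // mulnorm_sum.
have : K + \sum_(l | l != l0) K = K *+ #|I| by rewrite -sumr_const [RHS](bigD1 l0).
have : (0 < #|I|)%N by apply/card_gt0P; exists l0.
rewrite -mulr_natl; move: #|I| => m m_gt0.
have : 0 < m%:R :> R by rewrite ltr0n.
nra.
Qed.

Section Approximation.
Variables (R : realType) (D : idomainType) (I : finType) (v : I -> D -> R).
Hypotheses (hv : forall i, mulnorm (v i)) (v_eq0 : forall i x, v i x = 0 -> x = 0).

Let v_ge0 i x : 0 <= v i x := mulnorm_ge0 (hv i) x.
Let vM i x y : v i (x * y) = v i x * v i y := mulnormM (hv i) x y.
Let vX i x n : v i (x ^+ n) = v i x ^+ n := mulnormX (hv i) x n.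

Lemma mulnorm_gt0 i x : x != 0 -> 0 < v i x.
Proof. by move=> x0; rewrite lt_def v_ge0 andbT; apply: contra_neq x0; apply: v_eq0. Qed.

Lemma ratio_expr_lt_near i a b c e : v i a < v i b -> b != 0 -> 0 <= c -> 0 < e ->
  \forall n \near \oo, (v i a / v i b) ^+ n * c < e.
Proof.
move=> ab b0; apply: exprM_lt_near.
by rewrite divr_ge0 ?v_ge0 // ltr_pdivrMr ?mul1r // mulnorm_gt0.
Qed.

(* The pair [(a, b)] stands for the fraction [a / b] of the fraction field of [D]. *)
Definition peaks_over i (J : seq I) a b :=
  [/\ b != 0, v i b < v i a & {in J, forall j, v j a < v j b}].

Lemma peaks_over_cons_eq i j J a1 a2 b1 b2 :
  peaks_over i J a1 a2 -> peaks_over i [:: j] b1 b2 -> v j a1 = v j a2 ->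
  exists a b, peaks_over i (j :: J) a b.
Proof.
move=> [a2_neq0 ia Ja] [b2_neq0 ib /(_ j (mem_head _ _)) jb] ja.
have /filter_ex [n Jn] :
    \forall n \near \oo, {in J, forall l, (v l a1 / v l a2) ^+ n * v l b1 < v l b2}.
  apply: near_forall_in => l lJ.
  by apply: ratio_expr_lt_near; rewrite ?Ja ?v_ge0 ?mulnorm_gt0.
have va1 : 0 < v i a1 by apply: le_lt_trans ia.
have vb2 l : 0 < v l b2 by exact: mulnorm_gt0.
exists (a1 ^+ n * b1), (a2 ^+ n * b2); split.
- by rewrite mulf_neq0 // expf_neq0.
- rewrite !vM !vX; have : v i a2 ^+ n <= v i a1 ^+ n.
    by apply: lerXn2r; rewrite ?nnegrE ?v_ge0 // ltW.
  have := exprn_ge0 n (v_ge0 i a2); have := exprn_gt0 n va1; have := vb2 i; nra.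
- move=> l; rewrite inE => /predU1P [->|lJ].
    by rewrite !vM !vX ja ltr_pM2l // exprn_gt0 // mulnorm_gt0.
  by rewrite !vM !vX [_ * v l b2]mulrC; apply: expr_div_ltr (Jn l lJ); exact: mulnorm_gt0.
Qed.

Lemma peaks_over_cons_gt i j J a1 a2 b1 b2 :
  peaks_over i J a1 a2 -> peaks_over i [:: j] b1 b2 -> v j a2 < v j a1 ->
  exists a b, peaks_over i (j :: J) a b.
Proof.
move=> [a2_neq0 ia Ja] [b2_neq0 ib /(_ j (mem_head _ _)) jb] ja.
have va1 : 0 < v i a1 by apply: le_lt_trans ia.
have a1_neq0 : a1 != 0 by apply: contraTneq va1 => ->; rewrite mulnorm0 ?ltxx.
have vb2 l : 0 < v l b2 by exact: mulnorm_gt0.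
have /filter_ex [n [n_gt0 Jn in_ jn]] : \forall n \near \oo, [/\ (0 < n)%N,
    {in J, forall l, (v l a1 / v l a2) ^+ n * (v l b1 + v l b2) < v l b2},
    (v i a2 / v i a1) ^+ n * v i b2 < v i b1 - v i b2 &
    (v j a2 / v j a1) ^+ n * v j b2 < v j b2 - v j b1].
  near=> n; split.
  - by near: n; exists 1%N.
  - near: n; apply: near_forall_in => l lJ.
    by apply: ratio_expr_lt_near; rewrite ?Ja ?addr_ge0 ?v_ge0 ?mulnorm_gt0.
  - by near: n; apply: ratio_expr_lt_near; rewrite ?v_ge0 ?subr_gt0.
  - by near: n; apply: ratio_expr_lt_near; rewrite ?v_ge0 ?subr_gt0.
have vD l := mulnormD (hv l) (a1 ^+ n) (a2 ^+ n).
have vDB l := mulnormDB (hv l) (a1 ^+ n) (a2 ^+ n).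
have vDB' l := mulnormDB (hv l) (a2 ^+ n) (a1 ^+ n); rewrite addrC in vDB'.
have ia_n : v i (a2 ^+ n) < v i (a1 ^+ n) by rewrite !vX ltrXn2r ?v_ge0 // -lt0n.
exists (a1 ^+ n * b1), (b2 * (a1 ^+ n + a2 ^+ n)); split.
- rewrite mulf_neq0 //; apply: contraTneq ia_n => /eqP; rewrite addr_eq0 => /eqP->.
  by rewrite (mulnormN (hv i)) ltxx.
- have := expr_div_ltr (mulnorm_gt0 i a1_neq0) in_; rewrite !vM -!vX.
  have := ler_wpM2l (ltW (vb2 i)) (vD i); lra.
- move=> l; rewrite inE => /predU1P [->|lJ].
    have := expr_div_ltr (mulnorm_gt0 j a1_neq0) jn; rewrite !vM -!vX.
    have := ler_wpM2l (ltW (vb2 j)) (vDB j); lra.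
  have := expr_div_ltr (mulnorm_gt0 l a2_neq0) (Jn l lJ); rewrite !vM -!vX.
  have := ler_wpM2l (ltW (vb2 l)) (vDB' l); lra.
Unshelve. all: by end_near.
Qed.

Hypothesis separated : forall i j, i != j -> exists a b, peaks_over i [:: j] a b.

Lemma exists_peaks_over i j0 (J : seq I) : j0 != i -> i \notin J ->
  exists a b, peaks_over i J a b.
Proof.
move=> j0i; elim: J => [|j J IH].
  have ij0 : i != j0 by rewrite eq_sym.
  by have [a [b [b0 ab _]]] := separated ij0; exists a, b; split.
rewrite inE negb_or => /andP [ij /IH [a1 [a2 hJ]]].
have [b1 [b2 hj]] := separated ij.
have [ja|ja|ja] := ltgtP (v j a1) (v j a2).
- exists a1, a2; case: hJ => a2_neq0 ia Ja; split => // l.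
  by rewrite inE => /predU1P [->|/Ja].
- exact: peaks_over_cons_gt hJ hj ja.
- exact: peaks_over_cons_eq hJ hj ja.
Qed.

Definition peak_fractions (num den : I -> D) :=
  [/\ forall l, den l != 0, forall i, v i (den i) < v i (num i)
    & forall i l, l != i -> #|I|%:R * v i (num l) < v i (den l)].

Lemma exists_peak_fractions : (exists i j : I, i != j) ->
  exists num den, peak_fractions num den.
Proof.
move=> [i0 [j0 ij0]].
have peak i : exists ab : D * D, peaks_over i (enum [pred j | j != i]) ab.1 ab.2.
  have [j ji] : exists j, j != i.
    by have [->|ii0] := eqVneq i i0; [exists j0; rewrite eq_sym | exists i0; rewrite eq_sym].
  have i_notin : i \notin enum [pred j | j != i] by rewrite mem_enum inE eqxx.
  by have [a [b hab]] := exists_peaks_over ji i_notin; exists (a, b).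
have [ab Hab] := choice peak.
have /filter_ex [N [N_gt0 HN]] : \forall N \near \oo, (0 < N)%N /\
    forall i l, l != i -> (v i (ab l).1 / v i (ab l).2) ^+ N * #|I|%:R < 1.
  near=> N; split; first by near: N; exists 1%N.
  near: N; apply: filter_forall => i; apply: filter_forall => l.
  have [/eqP ->|li] := boolP (l == i); first exact: nearW.
  have [b_neq0 _ small] := Hab l.
  have il : i \in enum [pred j | j != l] by rewrite mem_enum inE eq_sym.
  by apply: filterS (ratio_expr_lt_near (small i il) b_neq0 (ler0n _ #|I|) ltr01) => N ? _.
exists (fun l => (ab l).1 ^+ N), (fun l => (ab l).2 ^+ N); split.
- by move=> l; case: (Hab l) => b_neq0 _ _; rewrite expf_neq0.
- by move=> i; case: (Hab i) => _ big _; rewrite !vX ltrXn2r ?v_ge0 // -lt0n.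
- move=> i l li; case: (Hab l) => b_neq0 _ _.
  by rewrite mulrC !vX -[X in _ < X]mul1r; apply: expr_div_ltr (HN i l li); exact: mulnorm_gt0.
Unshelve. all: by end_near.
Qed.

Lemma peak_relation_neq0 num den (c : I -> D) (e : D) (tau : I -> R) :
  peak_fractions num den -> e != 0 -> (exists l, 0 < tau l) ->
  (forall i l, v i (c l) = tau l * v i e) ->
  \sum_l c l * num l * \prod_(j | j != l) den j != 0.
Proof.
move=> [den_neq0 big small] e_neq0 [l1 tau_l1] vc.
pose l0 := Order.arg_max l1 xpredT tau.
have tau_max l : tau l <= tau l0 by rewrite /l0; case: arg_maxP => // ? _; apply.
have ve : 0 < v l0 e by exact: mulnorm_gt0.
have tau_ge0 l : 0 <= tau l by have := v_ge0 l0 (c l); rewrite vc pmulr_lge0.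
pose P l := \prod_(j | j != l) v l0 (den j).
have P_gt0 l : 0 < P l by apply: prodr_gt0 => j _; exact: mulnorm_gt0.
have vT l : v l0 (c l * num l * \prod_(j | j != l) den j) = tau l * v l0 e * v l0 (num l) * P l.
  by rewrite !vM vc (mulnorm_prod (hv l0)).
have Pall l : \prod_j v l0 (den j) = v l0 (den l) * P l by rewrite (bigD1 l).
apply: (@mulnorm_sum_neq0 _ _ _ _ _ l0 (tau l0 * v l0 e * \prod_j v l0 (den j))).
- exact: hv.
- by rewrite !mulr_ge0 ?tau_ge0 ?ltW //; apply: prodr_gt0 => j _; exact: mulnorm_gt0.
- move=> l ll0; rewrite vT (Pall l).
  have w_ge0 : 0 <= tau l * v l0 e * P l by rewrite !mulr_ge0 ?tau_ge0 ?ltW.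
  have := ler_wpM2l w_ge0 (ltW (small l0 l ll0)).
  have := ler_wpM2r (mulr_ge0 (mulr_ge0 (ltW ve) (ltW (P_gt0 l))) (v_ge0 l0 (den l))) (tau_max l).
  move: (tau l) (tau l0) (v l0 e) (P l) (v l0 (num l)) (v l0 (den l)) => t t0 x p a b.
  have -> : #|I|%:R * (t * x * a * p) = t * x * p * (#|I|%:R * a) by ring.
  have -> : t0 * x * (b * p) = t0 * (x * p * b) by ring.
  have -> : t * (x * p * b) = t * x * p * b by ring.
  by move=> h1 h2; apply: le_trans h1.
- have tau_l0 : 0 < tau l0 := lt_le_trans tau_l1 (tau_max l1).
  by rewrite vT (Pall l0) -!mulrA !ltr_pM2l // ltr_pM2r.
Qed.

End Approximation.

Lemma poly_family_dependent (K : fieldType) (I : finType) (N : nat) (w : I -> {poly K}) :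
  (N < #|I|)%N -> (forall i, (size (w i) <= N)%N) ->
  exists2 u : I -> K, \sum_i u i *: w i = 0 & exists i, u i != 0.
Proof.
move=> N_lt sw; pose A := \matrix_(i < #|I|, j < N) (w (enum_val i))`_j.
have : kermx A != 0.
  by rewrite kermx_eq0 /row_free; apply: contraTneq N_lt => <-; rewrite -leqNgt rank_leq_col.
case/rowV0Pn => x /sub_kermxP xA x_neq0; exists (fun i => x 0 (enum_rank i)).
  apply/polyP => j; rewrite coef_sum coef0.
  have [jN|Nj] := ltnP j N; last first.
    by rewrite big1 // => i _; rewrite coefZ nth_default ?mulr0 // (leq_trans (sw i)).
  transitivity ((x *m A) 0 (Ordinal jN)); last by rewrite xA mxE.
  rewrite mxE (reindex (@enum_rank I)) /=; last first.
    by exists enum_val => i _; rewrite ?enum_rankK ?enum_valK.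
  by apply: eq_bigr => i _; rewrite mxE enum_rankK coefZ.
have [k xk] : exists k, x 0 k != 0.
  apply/existsP; apply: contraNT x_neq0 => /existsPn x0.
  by apply/eqP/rowP => k; rewrite mxE; apply/eqP; rewrite -[_ == _]negbK x0.
by exists (enum_val k); rewrite enum_valK.
Qed.

Section Homogenization.
Variables (K : fieldType) (P Q : {poly K}).

(* The numerator of [g (P / Q)] times [Q ^+ n], for [size g <= n.+1]. *)
Definition homogn (n : nat) (g : {poly K}) : {poly K} :=
  \sum_(j < n.+1) g`_j *: (P ^+ j * Q ^+ (n - j)).

Lemma homognD n g h : homogn n (g + h) = homogn n g + homogn n h.
Proof. by rewrite /homogn -big_split; apply: eq_bigr => j _; rewrite coefD scalerDl. Qed.

Lemma homognZ n a g : homogn n (a *: g) = a *: homogn n g.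
Proof. by rewrite /homogn scaler_sumr; apply: eq_bigr => j _; rewrite coefZ scalerA. Qed.

Lemma homogn_poly n (x : nat -> K) :
  homogn n (\poly_(j < n.+1) x j) = \sum_(j < n.+1) x j *: (P ^+ j * Q ^+ (n - j)).
Proof. by apply: eq_bigr => j _; rewrite coef_poly ltn_ord. Qed.

Lemma homognS n (g : {poly K}) : (size g <= n.+1)%N -> homogn n.+1 g = homogn n g * Q.
Proof.
move=> sg; rewrite /homogn big_ord_recr /= nth_default // scale0r addr0 mulr_suml.
by apply: eq_bigr => j _ /=; rewrite -scalerAl -mulrA -exprSr subSn // -ltnS.
Qed.

Lemma homognDn n e (g : {poly K}) : (size g <= n.+1)%N -> homogn (n + e) g = homogn n g * Q ^+ e.
Proof.
move=> sg; elim: e => [|e IH]; first by rewrite addn0 expr0 mulr1.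
by rewrite addnS homognS ?IH ?exprSr ?mulrA // (leq_trans sg) // ltnS leq_addr.
Qed.

Lemma homognC n c : homogn n c%:P = c *: Q ^+ n.
Proof.
rewrite -[n]add0n homognDn ?size_polyC ?leq_b1 //.
by rewrite /homogn big_ord1 coefC /= !expr0 mulr1 -scalerAl mul1r.
Qed.

Lemma homognMX n g : homogn n.+1 (g * 'X) = P * homogn n g.
Proof.
rewrite /homogn big_ord_recl /= coefMX /= scale0r add0r mulr_sumr.
by apply: eq_bigr => j _; rewrite coefMX /= subSS exprS -mulrA scalerAr.
Qed.

Lemma homognM m n (g h : {poly K}) : (size g <= m.+1)%N -> (size h <= n.+1)%N ->
  homogn (m + n) (g * h) = homogn m g * homogn n h.
Proof.
elim: m g => [|m IH] g sg sh.
  by rewrite (size1_polyC sg) add0n mul_polyC homognZ homognC expr0 -scalerAl mul1r.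
pose g' := \poly_(i < m.+1) g`_i.+1.
have eg : g = g' * 'X + (g`_0)%:P.
  apply/polyP => -[|i]; rewrite coefD coefMX coefC //= ?add0r // addr0 coef_poly.
  by case: ltnP => // hi; rewrite nth_default // (leq_trans sg).
have sg' : (size g' <= m.+1)%N by apply: size_poly.
rewrite [in RHS]eg [in LHS]eg mulrDl mulrAC mul_polyC addSn homognD homognMX homognZ.
rewrite IH // homognD homognMX homognC -addSn addnC homognDn //.
by rewrite -!mul_polyC; ring.
Qed.

Let d := (maxn (size P) (size Q)).-1.

Lemma size_homogn_monomial n j : (j <= n)%N -> (size (P ^+ j * Q ^+ (n - j))%R <= d * n + 1)%N.
Proof.
move=> jn; apply: leq_trans (size_mul_leq _ _) _.
have := size_exp_leq P j; have := size_exp_leq Q (n - j).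
have hP : ((size P).-1 <= d)%N by rewrite /d; have := leq_maxl (size P) (size Q); lia.
have hQ : ((size Q).-1 <= d)%N by rewrite /d; have := leq_maxr (size P) (size Q); lia.
have := leq_mul hP (leqnn j); have := leq_mul hQ (leqnn (n - j)).
have : (d * j + d * (n - j) = d * n)%N by rewrite -mulnDr subnKC.
lia.
Qed.

(* Dimension count: the [#|I| * n.+1] polynomials [P^j Q^(n-j) r l] have size at most [d n + n],
   where [n] bounds the sizes of the [r l]. *)
Lemma homogn_dependent (I : finType) (r : I -> {poly K}) : (0 < d)%N -> (d < #|I|)%N ->
  exists n (c : I -> {poly K}),
    [/\ forall l, (size (c l) <= n.+1)%N, exists l, c l != 0
      & \sum_l homogn n (c l) * r l = 0].
Proof.
move=> d_gt0 dI; pose n := \max_l size (r l).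
have rn l : (size (r l) <= n)%N by apply: (leq_bigmax_cond (F := fun l => size (r l))).
pose w (p : I * 'I_n.+1) := P ^+ p.2 * Q ^+ (n - p.2) * r p.1.
have [|p|u u_rel [[l0 j0] u_neq0]] := @poly_family_dependent _ _ (d * n + n) w.
- rewrite card_prod card_ord; have : ((d + 1) * n.+1 <= #|I| * n.+1)%N.
    by rewrite leq_mul2r addn1 dI orbT.
  nia.
- rewrite /w; apply: leq_trans (size_mul_leq _ _) _.
  have := size_homogn_monomial (ltnSE (ltn_ord p.2)); have := rn p.1 => ha hb.
  by rewrite -subn1 (leq_trans (leq_sub2r 1 (leq_add hb ha))) // addnAC addnK.
exists n, (fun l => \poly_(j < n.+1) u (l, inord j)); split.
- by move=> l; apply: size_poly.
- exists l0; apply: contraNneq u_neq0 => /(congr1 (fun g : {poly K} => g`_j0)).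
  by rewrite coef_poly ltn_ord coef0 inord_val => ->.
- rewrite -[RHS]u_rel (eq_bigr (fun p => u (p.1, p.2) *: w (p.1, p.2))) => [|[] //].
  rewrite -(pair_bigA _ (fun l (j : 'I_n.+1) => u (l, j) *: w (l, j))) /=; apply: eq_bigr => l _.
  rewrite homogn_poly mulr_suml; apply: eq_bigr => j _.
  by rewrite inord_val -scalerAl.
Qed.

End Homogenization.

Lemma countable_setU (T : Type) (X Y : set T) : countable X -> countable Y -> countable (X `|` Y).
Proof.
move=> cX cY; have -> : X `|` Y = \bigcup_(b in [set: bool]) (if b then X else Y).
  apply/seteqP; split => z; first by case=> h; [exists true | exists false].
  by case=> -[] _; [left | right].
by apply: bigcup_countable => // -[].
Qed.

Section Components.
Variables (R : realType) (k : closedFieldType) (absv : k -> R).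
Local Notation connected := (connectedP1 absv).
Local Notation component := (component absv).

Lemma connectedU (C1 C2 : set (pt R k)) : connected C1 -> connected C2 ->
  C1 `&` C2 !=set0 -> connected (C1 `|` C2).
Proof.
move=> c1 c2 [p [p1 p2]] [U [V [[oU oV] sub [u [uC uU]] [w [wC wV]] disj]]].
have side C : C `<=` C1 `|` C2 -> connected C -> C `&` U = set0 \/ C `&` V = set0.
  move=> CC cC; apply: contrapT => /not_orP [/eqP/set0P hU /eqP/set0P hV].
  apply: cC; exists U, V; split => //; first by move=> x /CC /sub.
  apply/seteqP; split => // x [[/CC xC xU] xV].
  by rewrite -disj.
have avoid W C x : C `&` W = set0 -> C x -> ~ W x.
  by move=> CW Cx Wx; have : (C `&` W) x by []; rewrite CW.
have pUV := sub p (or_introl p1).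
case: (side C1 (fun x h => or_introl h) c1) => [h1|h1];
case: (side C2 (fun x h => or_intror h) c2) => [h2|h2].
- by case: uC => h; [exact: avoid h1 h uU | exact: avoid h2 h uU].
- by case: pUV; [exact: avoid h1 p1 | exact: avoid h2 p2].
- by case: pUV; [exact: avoid h2 p2 | exact: avoid h1 p1].
- by case: wC => h; [exact: avoid h1 h wV | exact: avoid h2 h wV].
Qed.

Lemma component_sub A x : component A x `<=` A.
Proof. by move=> y [C [CA _ _ Cy]]; apply: CA. Qed.

Lemma component_eq A x y : component A x y -> component A x = component A y.
Proof.
move=> [C [CA cC Cx Cy]].
have join z C' : C' `<=` A -> connected C' -> C' z -> C `&` C' !=set0 ->
    exists C'', [/\ C'' `<=` A, connected C'', C'' x, C'' y & C'' z].
  move=> C'A cC' C'z CC'; exists (C `|` C'); split; [|exact: connectedU|by left|by left|by right].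
  by move=> w [] ?; [apply: CA | apply: C'A].
apply/seteqP; split => z [C' [C'A cC' h1 h2]].
- by have [C'' [? ? _ ? ?]] := join z C' C'A cC' h2 (ex_intro _ x (conj Cx h1)); exists C''.
- by have [C'' [? ? ? _ ?]] := join z C' C'A cC' h2 (ex_intro _ y (conj Cy h1)); exists C''.
Qed.

End Components.

Section AbsoluteValue.
Variables (R : realType) (k : closedFieldType) (absv : k -> R).
Hypothesis Habs : complete_nonarch_abs absv.

Lemma absv_eq0 x : absv x = 0 -> x = 0. Proof. by case: Habs => _ /(_ x) []. Qed.

Lemma absv_gt0 x : x != 0 -> 0 < absv x.
Proof.
case: Habs => ge0 _ _ _ _ x_neq0.
by rewrite lt_def ge0 andbT; apply: contra_neq x_neq0; apply: absv_eq0.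
Qed.

Lemma absv_mulnorm : mulnorm absv.
Proof.
case: Habs => ge0 eq0 absvM [ultra _] _.
have absv1 : absv 1 = 1.
  have : absv 1 * (absv 1 - 1) = 0 by rewrite mulrBr mulr1 -absvM mulr1 subrr.
  by move/eqP; rewrite mulf_eq0 subr_eq0 gt_eqF ?absv_gt0 ?oner_neq0 //= => /eqP.
split=> [||//|//|x y]; [exact: ge0 | exact/eq0 |].
by apply: le_trans (ultra x y) _; rewrite ge_max !(lerDl, lerDr) !ge0.
Qed.

Lemma absvV x : absv x^-1 = (absv x)^-1.
Proof.
have [->|x_neq0] := eqVneq x 0; first by rewrite invr0 (mulnorm0 absv_mulnorm) invr0.
apply: (mulfI (lt0r_neq0 (absv_gt0 x_neq0))).
by rewrite -(mulnormM absv_mulnorm) !mulfV ?(mulnorm1 absv_mulnorm) ?lt0r_neq0 ?absv_gt0.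
Qed.

Lemma exists_absv_gt1 : exists c, 1 < absv c.
Proof.
case: Habs => _ _ _ [_ [c [c_neq0 c_neq1]]] _.
have c0 : c != 0 by apply: contra_neq c_neq0 => ->; rewrite (mulnorm0 absv_mulnorm).
have [c_lt1|c_gt1|] := ltgtP (absv c) 1; last by move/eqP; rewrite (negbTE c_neq1).
  by exists c^-1; rewrite absvV invf_gt1 // absv_gt0.
by exists c.
Qed.

Lemma exists_absv_between (c : k) (B : R) : 1 < absv c -> 0 < B ->
  exists2 lam, lam != 0 & B < absv lam <= absv c * B.
Proof.
move=> c_gt1 B_gt0; have c_neq0 : c != 0.
  by apply: contraTneq c_gt1 => ->; rewrite (mulnorm0 absv_mulnorm) ltr10.
have q_gt0 : 0 < absv c by apply: lt_trans c_gt1.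
have absvX := mulnormX absv_mulnorm.
wlog B_ge1 : B B_gt0 / 1 <= B.
  move=> hw; have /filter_ex [N BN] := expr_gt_near B^-1 c_gt1.
  have qN_gt0 : 0 < absv c ^+ N by rewrite exprn_gt0.
  have B'_gt0 : 0 < B * absv c ^+ N by rewrite mulr_gt0.
  have B'_ge1 : 1 <= B * absv c ^+ N by rewrite -ler_pdivrMl // mulr1 ltW.
  have [lam lam_neq0 /andP [lo hi]] := hw _ B'_gt0 B'_ge1.
  exists (lam / c ^+ N); first by rewrite mulf_neq0 ?invr_eq0 ?expf_neq0.
  rewrite (mulnormM absv_mulnorm) absvV absvX ltr_pdivlMr // ler_pdivrMr //.
  by rewrite lo -mulrA.
have /filter_ex [M BM] := expr_gt_near B c_gt1.
have [m Bm min_m] := ex_minnP (ex_intro (fun m => B < absv c ^+ m) M BM).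
have m_gt0 : (0 < m)%N by case: m Bm {min_m} => // Bm; rewrite expr0 ltNge B_ge1 in Bm.
have Bm1 : absv c ^+ m.-1 <= B.
  by rewrite leNgt; apply/negP => /min_m; rewrite -ltnS prednK // ltnn.
exists (c ^+ m); first by rewrite expf_neq0.
by rewrite absvX Bm -(prednK m_gt0) exprS ler_pM2l.
Qed.

Lemma exists_absv_between_expr (al be : R) : 0 < be -> be < al ->
  exists n (lam : k), [/\ lam != 0, be ^+ n < absv lam & absv lam < al ^+ n].
Proof.
move=> be_gt0 be_al; have [c c_gt1] := exists_absv_gt1.
have /filter_ex [n hn] : \forall n \near \oo, absv c < (al / be) ^+ n.
  by apply: expr_gt_near; rewrite ltr_pdivlMr // mul1r.
have [lam lam_neq0 /andP [lo hi]] := exists_absv_between c_gt1 (exprn_gt0 n be_gt0).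
exists n, lam; split => //; apply: le_lt_trans hi _.
by rewrite -ltr_pdivlMr ?exprn_gt0 // -expr_div_n.
Qed.

End AbsoluteValue.

Section Seminorms.
Variables (R : realType) (k : closedFieldType) (absv : k -> R).
Hypothesis Habs : complete_nonarch_abs absv.

Lemma seminormC s c : seminormA1 absv s -> s c%:P = absv c.
Proof. by case. Qed.

Lemma seminorm_mulnorm s : seminormA1 absv s -> mulnorm s.
Proof.
move=> hs; have sC c := seminormC c hs.
case: hs => ge0 sM sD _; split => //.
- by rewrite -[0]/(0%:P) sC (mulnorm0 (absv_mulnorm Habs)).
- by rewrite -[1]/(1%:P) sC (mulnorm1 (absv_mulnorm Habs)).
Qed.

Lemma typeI_seminorm b : seminormA1 absv (fun g : {poly k} => absv g.[b]).
Proof.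
have hv := absv_mulnorm Habs.
by split => [g|g h|g h|c]; rewrite ?mulnorm_ge0 ?hornerM ?(mulnormM hv) ?hornerD ?mulnormD ?hornerC.
Qed.

Definition definite (t : {poly k} -> R) := forall g, t g = 0 -> g = 0.

Lemma definite_gt0 s g : seminormA1 absv s -> definite s -> g != 0 -> 0 < s g.
Proof.
move=> hs ds g_neq0; rewrite lt_def (mulnorm_ge0 (seminorm_mulnorm hs)) andbT.
by apply: contra_neq g_neq0; apply: ds.
Qed.

Lemma typeI_not_definite b : ~ definite (fun g : {poly k} => absv g.[b]).
Proof.
move/(_ ('X - b%:P)); rewrite hornerXsubC subrr (mulnorm0 (absv_mulnorm Habs)).
by move=> /(_ erefl) /eqP; rewrite polyXsubC_eq0.
Qed.

Lemma seminorm_neq0_XsubC s g : seminormA1 absv s -> g != 0 -> s g = 0 ->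
  exists z, s ('X - z%:P) = 0.
Proof.
move=> hs g_neq0 sg; have hv := seminorm_mulnorm hs.
have [rs eg] := closed_field_poly_normal g.
have : s g = absv (lead_coef g) * \prod_(z <- rs) s ('X - z%:P).
  by rewrite [in LHS]eg -mul_polyC (mulnormM hv) (mulnorm_prod hv) seminormC.
rewrite sg => /esym/eqP; rewrite mulf_eq0 => /orP [/eqP/(absv_eq0 Habs)/eqP|].
  by rewrite lead_coef_eq0 (negbTE g_neq0).
by rewrite prodf_seq_eq0 => /hasP [z _ /eqP sz]; exists z.
Qed.

Lemma seminorm_root_eq0 s z p : seminormA1 absv s -> s ('X - z%:P) = 0 -> root p z -> s p = 0.
Proof.
by move=> hs sz /factor_theorem [q ->]; rewrite (mulnormM (seminorm_mulnorm hs)) sz mulr0.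
Qed.

Lemma definite_seminorms_separated s1 s2 : seminormA1 absv s1 -> seminormA1 absv s2 ->
  definite s1 -> definite s2 -> s1 != s2 ->
  exists a b, [/\ b != 0, s1 b < s1 a & s2 a < s2 b].
Proof.
move=> h1 h2 d1 d2 /eqP s12.
have [g sg] : exists g, s1 g != s2 g.
  by apply: contra_notP s12 => /forallNP H; apply/funext => g; apply/eqP; apply: contra_notT (H g).
have g_neq0 : g != 0.
  apply: contraNneq sg => ->.
  by rewrite (mulnorm0 (seminorm_mulnorm h1)) (mulnorm0 (seminorm_mulnorm h2)).
have p1 := definite_gt0 h1 d1 g_neq0; have p2 := definite_gt0 h2 d2 g_neq0.
have sX := mulnormX (seminorm_mulnorm h1); have tX := mulnormX (seminorm_mulnorm h2).
have [lt|lt|eq12] := ltgtP (s1 g) (s2 g); last by rewrite eq12 eqxx in sg.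
- have [n [lam [lam_neq0 lo hi]]] := exists_absv_between_expr Habs p1 lt.
  exists lam%:P, (g ^+ n); split; first by rewrite expf_neq0.
  + by rewrite sX seminormC.
  + by rewrite tX seminormC.
- have [n [lam [lam_neq0 lo hi]]] := exists_absv_between_expr Habs p2 lt.
  exists (g ^+ n), lam%:P; split; first by rewrite polyC_eq0.
  + by rewrite sX seminormC.
  + by rewrite tX seminormC.
Qed.

End Seminorms.

Section TypeII.
Variables (R : realType) (k : closedFieldType) (absv : k -> R).
Hypothesis Habs : complete_nonarch_abs absv.
Let hv := absv_mulnorm Habs.

Lemma disc_image_has_ubound (a : k) (r : R) (g : {poly k}) :
  has_ubound [set absv g.[z] | z in [set z | absv (z - a) <= r]].
Proof.
exists (\sum_(i < size g) absv g`_i * (r + absv a) ^+ i) => _ [z /= za <-].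
have za' : absv z <= r + absv a by have := mulnormD hv (z - a) a; rewrite subrK; lra.
rewrite horner_coef; apply: le_trans (mulnorm_sum hv _ _ _) _.
apply: ler_sum => i _; rewrite (mulnormM hv) (mulnormX hv).
rewrite ler_wpM2l ?(mulnorm_ge0 hv) // lerXn2r ?nnegrE ?(mulnorm_ge0 hv) //.
exact: le_trans (mulnorm_ge0 hv _) za'.
Qed.

(* The points [a + c e^n] with [0 < |e| < 1] are pairwise distinct and lie in the disc. *)
Lemma exists_nonroot_in_disc (a c : k) (g : {poly k}) : c != 0 -> g != 0 ->
  exists2 z, absv (z - a) <= absv c & g.[z] != 0.
Proof.
move=> c_neq0 g_neq0; have [e0 e0_gt1] := exists_absv_gt1 Habs.
have e0_neq0 : e0 != 0 by apply: contraTneq e0_gt1 => ->; rewrite (mulnorm0 hv) ltr10.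
pose e := e0^-1; have e_gt0 : 0 < absv e by rewrite absv_gt0 ?invr_eq0.
have e_lt1 : absv e < 1 by rewrite absvV // invf_lt1 // (lt_trans ltr01).
pose zs := [seq a + c * e ^+ n | n <- iota 0 (size g)].
have : ~~ all (root g) zs.
  apply/negP => allr; suff /(max_poly_roots g_neq0 allr) : uniq zs.
    by rewrite size_map size_iota ltnn.
  rewrite map_inj_uniq ?iota_uniq // => i j /addrI /(mulfI c_neq0) eij.
  apply: (ieexprIn e_gt0 (negbT (lt_eqF e_lt1))).
  by rewrite -!(mulnormX hv) eij.
case/allPn => _ /mapP [n _ ->] nroot; exists (a + c * e ^+ n) => //.
rewrite addrC addKr (mulnormM hv) (mulnormX hv) ger_pMr ?absv_gt0 //.
by apply: exprn_ile1; rewrite ?mulnorm_ge0 // ltW.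
Qed.

Lemma zeta_definite (a c : k) : c != 0 -> definite (zeta absv a (absv c)).
Proof.
move=> c_neq0 g zg; apply/eqP; apply: contraT => g_neq0.
have [z za gz] := exists_nonroot_in_disc a c_neq0 g_neq0.
have : absv g.[z] <= zeta absv a (absv c) g.
  by apply: ub_le_sup; [exact: disc_image_has_ubound | exists z].
by rewrite zg leNgt absv_gt0.
Qed.

End TypeII.

Section RationalAction.
Variables (R : realType) (k : closedFieldType) (absv : k -> R).
Hypothesis Habs : complete_nonarch_abs absv.
Variable f : ratfun k.
Local Notation P := (numer f).
Local Notation Q := (denom f).

Definition ratpush (s : {poly k} -> R) (g : {poly k}) : R :=
  s (homog P Q g) / s Q ^+ (size g).-1.

Lemma homog_homogn g : homog P Q g = homogn P Q (size g).-1 g.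
Proof.
rewrite /homog /homogn; case E: (size g) => [|n] //=.
by move/eqP: E; rewrite size_poly_eq0 => /eqP ->; rewrite big_ord0 big_ord1 coef0 scale0r.
Qed.

Section Push.
Variable s : {poly k} -> R.
Hypotheses (hs : seminormA1 absv s) (sQ : s Q != 0).
Let hv := seminorm_mulnorm Habs hs.

Lemma ratpush_homogn n (g : {poly k}) : (size g <= n.+1)%N ->
  ratpush s g = s (homogn P Q n g) / s Q ^+ n.
Proof.
move=> sg; rewrite /ratpush homog_homogn.
have -> : n = ((size g).-1 + (n - (size g).-1))%N by lia.
rewrite homognDn ?leqSpred // (mulnormM hv) (mulnormX hv) exprD.
by field; rewrite !expf_neq0.
Qed.

Lemma ratpush_seminorm : seminormA1 absv (ratpush s).
Proof.
have sQ_gt0 : 0 < s Q by rewrite lt_def sQ mulnorm_ge0.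
have size_max (g h : {poly k}) n : (size g <= n.+1)%N -> (size h <= n.+1)%N ->
    (size (g + h)%R <= n.+1)%N.
  by move=> sg sh; rewrite (leq_trans (size_polyD _ _)) // geq_max sg.
split.
- by move=> g; rewrite /ratpush divr_ge0 ?exprn_ge0 ?mulnorm_ge0.
- move=> g h; set m := (size g).-1; set n := (size h).-1.
  have sg : (size g <= m.+1)%N by rewrite leqSpred.
  have sh : (size h <= n.+1)%N by rewrite leqSpred.
  have sgh : (size (g * h)%R <= (m + n).+1)%N.
    by rewrite (leq_trans (size_mul_leq _ _)) // /m /n; lia.
  rewrite !(ratpush_homogn sgh, ratpush_homogn sg, ratpush_homogn sh) homognM //.
  by rewrite (mulnormM hv) exprD; field; rewrite !expf_neq0.
- move=> g h; set n := maxn (size g).-1 (size h).-1.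
  have sg : (size g <= n.+1)%N by rewrite /n; lia.
  have sh : (size h <= n.+1)%N by rewrite /n; lia.
  rewrite (ratpush_homogn (size_max _ _ _ sg sh)) (ratpush_homogn sg) (ratpush_homogn sh).
  by rewrite homognD -mulrDl ler_pM2r ?invr_gt0 ?exprn_gt0 // mulnormD.
- move=> c; rewrite (@ratpush_homogn 0) ?size_polyC ?leq_b1 //.
  by rewrite homognC !expr0 divr1 alg_polyC (seminormC _ hs).
Qed.

Lemma ratpush_XsubC_eq0 z : s ('X - z%:P) = 0 -> Q.[z] != 0 ->
  ratpush s ('X - (P.[z] / Q.[z])%:P) = 0.
Proof.
move=> sz Qz; rewrite (@ratpush_homogn 1) ?size_XsubC //.
have -> : homogn P Q 1 ('X - (P.[z] / Q.[z])%:P) = P - (P.[z] / Q.[z]) *: Q.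
  rewrite /homogn big_ord_recl big_ord1 /= !coefB !coefX !coefC /= sub0r subr0.
  by rewrite !expr0 expr1 mul1r mulr1 scale1r scaleNr addrC.
rewrite (seminorm_root_eq0 Habs hs sz) ?mul0r //.
by rewrite /root hornerD hornerN hornerZ divfK // subrr.
Qed.

(* If [s] kills ['X - z], then [z] is not a pole of [f] and [ratpush s] kills ['X - f(z)]. *)
Lemma ratpush_definite : definite (ratpush s) -> definite s.
Proof.
move=> dpush g sg; apply/eqP; apply: contraT => g_neq0.
have [z sz] := seminorm_neq0_XsubC Habs hs g_neq0 sg.
have Qz : Q.[z] != 0.
  by apply: contra_neq sQ => Qz; apply: (seminorm_root_eq0 Habs hs sz); apply/eqP.
by move/dpush/eqP: (ratpush_XsubC_eq0 sz Qz); rewrite polyXsubC_eq0.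
Qed.

End Push.

Lemma ratact_inP1 x : inP1 absv x -> inP1 absv (ratact absv f x).
Proof.
case: x => [s|] /= hs; rewrite /ratact; case: ifP => //= /negbT sQ.
  exact: ratpush_seminorm.
exact: typeI_seminorm.
Qed.

Lemma ratact_definite_preimage y t : inP1 absv y -> ratact absv f y = Some t -> definite t ->
  exists2 s, y = Some s & [/\ seminormA1 absv s, s Q != 0, t = ratpush s & definite s].
Proof.
case: y => [s|] /= hs; rewrite /ratact; last first.
  by case: ifP => // _ [<-] /typeI_not_definite.
case: ifP => // /negbT sQ [<-] dt; exists s => //; split => //.
exact: ratpush_definite.
Qed.

End RationalAction.

Section Fibers.
Variables (R : realType) (k : closedFieldType) (absv : k -> R).
Hypothesis Habs : complete_nonarch_abs absv.
Variable f : ratfun k.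
Hypothesis deg_gt0 : (0 < ratdeg f)%N.
Local Notation P := (numer f).
Local Notation Q := (denom f).
Local Notation ratpush := (ratpush f).

Lemma ratpush_fiber_card (I : finType) (s : I -> {poly k} -> R) t : definite t ->
  (forall l, [/\ seminormA1 absv (s l), s l Q != 0, t = ratpush (s l) & definite (s l)]) ->
  injective s -> (#|I| <= ratdeg f)%N.
Proof.
move=> dt hs s_inj; rewrite leqNgt; apply/negP => dI.
have hv l : mulnorm (s l) by have [h _ _ _] := hs l; exact (seminorm_mulnorm Habs h).
have s_eq0 l g : s l g = 0 -> g = 0 by case: (hs l) => _ _ _; apply.
have separated i j : i != j -> exists a b, peaks_over s i [:: j] a b.
  move=> ij; have [hi _ _ di] := hs i; have [hj _ _ dj] := hs j.
  have [|a [b [b_neq0 ia ja]]] := definite_seminorms_separated Habs hi hj di dj.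
    by apply: contra_neq ij; apply: s_inj.
  by exists a, b; split => // l; rewrite inE => /eqP ->.
have [i [j [_ _ ij]]] : exists i j, [/\ i \in I, j \in I & i != j].
  by apply/card_gt1P; apply: leq_ltn_trans dI.
have ht : seminormA1 absv t by case: (hs i) => hi sQ -> _; exact: ratpush_seminorm.
have [num [den peaks]] := exists_peak_fractions hv s_eq0 separated (ex_intro _ i (ex_intro _ j ij)).
pose r l := num l * \prod_(j | j != l) den j.
have [n [c [sc [l0 c_neq0] rel]]] := homogn_dependent (P := P) (Q := Q) r deg_gt0 dI.
have rel' : \sum_l homogn P Q n (c l) * num l * \prod_(j | j != l) den j = 0.
  by rewrite -[RHS]rel; apply: eq_bigr => l _; rewrite mulrA.
move/eqP: rel'; apply/negP.
apply: (peak_relation_neq0 hv s_eq0 (e := Q ^+ n) (tau := fun l => t (c l)) peaks).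
- by rewrite expf_neq0 ?denom_neq0.
- by exists l0; exact (definite_gt0 Habs ht dt c_neq0).
- move=> i' l; have [hi sQ -> _] := hs i'.
  by rewrite (ratpush_homogn Habs hi sQ (sc l)) (mulnormX (hv i')) divfK // expf_neq0.
Qed.

Lemma ratact_fiber_finite t : definite t ->
  finite_set [set y | inP1 absv y /\ ratact absv f y = Some t].
Proof.
move=> dt; apply: contrapT => /(infinite_set_fset (ratdeg f).+1) [B BF cardB].
pose y (l : 'I_(ratdeg f).+1) := nth None B l.
have yB l : y l \in B by apply: mem_nth; exact: leq_trans (ltn_ord l) cardB.
have /choice [s hs] l : exists s, y l = Some s /\
    [/\ seminormA1 absv s, s Q != 0, t = ratpush s & definite s].
  have [iy ey] := BF _ (yB l).
  by have [s -> hs] := ratact_definite_preimage Habs iy ey dt; exists s.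
have s_inj : injective s.
  move=> l l' sl; apply/val_inj/eqP.
  rewrite -(nth_uniq None _ _ (fset_uniq B)) ?(leq_trans (ltn_ord _) cardB) //.
  by apply/eqP; rewrite -/(y l) -/(y l') (hs l).1 (hs l').1 sl.
by have := ratpush_fiber_card dt (fun l => (hs l).2) s_inj; rewrite card_ord ltnn.
Qed.

Definition definite_point (y : pt R k) := exists2 t, y = Some t & definite t.

Lemma preimage_countable (A : set (pt R k)) : countable A -> A `<=` definite_point ->
  countable [set y | inP1 absv y /\ A (ratact absv f y)] /\
  [set y | inP1 absv y /\ A (ratact absv f y)] `<=` definite_point.
Proof.
move=> cA dA; split.
  have sub : [set y | inP1 absv y /\ A (ratact absv f y)] `<=`
      \bigcup_(x in A) [set y | inP1 absv y /\ ratact absv f y = x].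
    by move=> y [iy Ay]; exists (ratact absv f y).
  apply: sub_countable (subset_card_le sub) _; apply: bigcup_countable => // x /dA [t -> dt].
  exact/finite_set_countable/ratact_fiber_finite.
move=> y [iy /dA [t ey dt]].
by have [s -> [_ _ _ ds]] := ratact_definite_preimage Habs iy ey dt; exists s.
Qed.

Lemma iter_preimage_countable (A : set (pt R k)) n : countable A -> A `<=` definite_point ->
  countable [set y | inP1 absv y /\ A (iter n (ratact absv f) y)] /\
  [set y | inP1 absv y /\ A (iter n (ratact absv f) y)] `<=` definite_point.
Proof.
move=> cA dA; elim: n => [|n [cS dS]].
  by split; [apply: sub_countable cA; apply: subset_card_le => y [] | move=> y [_ /dA]].
have -> : [set y | inP1 absv y /\ A (iter n.+1 (ratact absv f) y)] =
    [set y | inP1 absv y /\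
      (inP1 absv (ratact absv f y) /\ A (iter n (ratact absv f) (ratact absv f y)))].
  apply/seteqP; split => y /= [iy]; rewrite -iterSr; last by case.
  by move=> Ay; split => //; split => //; exact: ratact_inP1.
exact: (preimage_countable cS dS).
Qed.

End Fibers.

Lemma typeII_definite (R : realType) (k : closedFieldType) (absv : k -> R) y :
  complete_nonarch_abs absv -> typeII absv y -> definite_point y.
Proof.
by move=> Habs [a [c [c_neq0 ->]]]; exists (zeta absv a (absv c)) => //; exact: zeta_definite.
Qed.

Lemma Jdomain_component (R : realType) (k : closedFieldType) (absv : k -> R) f G U :
  Jdomain absv f G U -> exists n y, [/\ inP1 absv y, G (iter n.+1 (ratact absv f) y) &
    U = component absv [set y | inP1 absv y /\ ~ G y] y].
Proof.
case=> [[x [ix nGx EU]] nF].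
have [n [y [n_gt0 Uy Gy]]] : exists n y, [/\ (0 < n)%N, U y & G (iter n (ratact absv f) y)].
  apply: contrapT => H; apply: nF; split; first by exists x.
  by move=> n n0 y Uy Gy; apply: H; exists n, y.
have [iy _] : inP1 absv y /\ ~ G y by rewrite EU in Uy; exact: component_sub Uy.
case: n n_gt0 Gy => // n _ Gy; exists n, y; split => //.
by rewrite EU in Uy *; rewrite (component_eq Uy).
Qed.

Unset Implicit Arguments. Set Strict Implicit. Set Printing Implicit Defensive.

Theorem lemma2p4 (R : realType) (k : closedFieldType) (absv : k -> R)
  (Habs : complete_nonarch_abs absv)
  (f : ratfun k) (Hdeg : (2 <= ratdeg f)%N)
  (G : set (pt R k)) (HG : vertex_set absv G) :
  countable (Jset absv f G).
Proof.
case: HG => Gfin _ Gtype; have deg_gt0 : (0 < ratdeg f)%N by apply: leq_trans Hdeg.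
have cGn n : countable [set y | inP1 absv y /\ G (iter n.+1 (ratact absv f) y)].
  by case: (iter_preimage_countable Habs deg_gt0 n.+1 (finite_set_countable Gfin)
    (fun y Gy => typeII_definite Habs (Gtype y Gy))).
pose S := \bigcup_(n in [set: nat]) [set y | inP1 absv y /\ G (iter n.+1 (ratact absv f) y)].
have JS : Jset absv f G `<=`
    component absv [set y | inP1 absv y /\ ~ G y] @` S `|` (fun g => [set g]) @` G.
  move=> U [/Jdomain_component [n [y [iy Gy ->]]]|[g [Gg ->]]]; last by right; exists g.
  by left; exists y => //; exists n.
apply: sub_countable (subset_card_le JS) _; apply: countable_setU.
- by apply: sub_countable (card_image_le _ _) _; exact: bigcup_countable.
- by apply: sub_countable (card_image_le _ _) _; exact: finite_set_countable.
Qed.
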